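(* Let $N$ be a positive integer and $t>-\log N$. For integers $n\ge N$ let $$\eta_n(t,N)=\sum_{k=N}^{n}\Big(\frac{1}{t+\log(k+\frac12)}-\frac{1}{H_k-\gamma+t}\Big),$$ and set $\eta_{N-1}(t,N)=0$. (1) The sequence $(\eta_n(t,N))_{n\ge N}$ is positive, strictly increasing and bounded above; hence $\eta(t,N)=\lim_{n\to\infty}\eta_n(t,N)>0$ exists. (2) For all $n\ge N$, $\eta(t,N)-\eta_{n-1}(t,N)=\eta(t,n)$ and $$\frac1{24}\int_{n+1}^\infty\frac{dx}{x^2(t+\log x)^2}\le\eta(t,n)\le\frac1{24}\int_n^\infty\frac{dx}{x^2(t+\log x)^2}.$$ (3) For all $n\ge N$, $$\frac{1}{24(n+1)(t+\log(n+1))^2}-\frac{1}{12(n+1)(t+\log(n+1))^3}<\eta(t,N)-\eta_{n-1}(t,N)<\frac{1}{24n(t+\log n)^2}.$$ Consequently $\eta(t,N)=\eta_{n-1}(t,N)+\frac{1+o(1)}{24n(\log n)^2}$ as $n\to\infty$, and $\eta(t,N)=O\!\left(\frac1{Nt^2}\right)$ as $t\to\infty$, with implied constant independent of $N$.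
   Context: $\gamma$ is the Euler–Mascheroni constant and $H_k=\sum_{j=1}^k1/j$ is the $k$-th harmonic number. *)

From Stdlib Require Import Reals Lra Lia ClassicalEpsilon.
Open Scope R_scope.

Fixpoint harmonic (k : nat) : R :=
  match k with
  | O => 0
  | S m => harmonic m + / INR (S m)
  end.

Definition euler_gamma : R :=
  epsilon (inhabits 0) (fun g => Un_cv (fun n => harmonic n - ln (INR n)) g).

Definition eta_term (t : R) (k : nat) : R :=
  / (t + ln (INR k + / 2)) - / (harmonic k - euler_gamma + t).

(* eta_n(t,N) = sum_{k=N}^{n} eta_term t k ; equals 0 when n < N
   (in particular eta_{N-1}(t,N) = 0 for N >= 1). *)
Fixpoint eta_partial (t : R) (N n : nat) : R :=
  match n with
  | O => if (N <=? 0)%nat then eta_term t 0 else 0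
  | S m => eta_partial t N m + (if (N <=? S m)%nat then eta_term t (S m) else 0)
  end.

Definition eta (t : R) (N : nat) : R :=
  epsilon (inhabits 0) (fun l => Un_cv (fun n => eta_partial t N n) l).

Definition eta_integrand (t x : R) : R := / (x ^ 2 * (t + ln x) ^ 2).

Definition improper_integral_to (f : R -> R) (a L : R) : Prop :=
  (forall b, a <= b -> inhabited (Riemann_integrable f a b)) /\
  (forall eps, eps > 0 -> exists M, forall b (pr : Riemann_integrable f a b),
      M <= b -> Rabs (RiemannInt pr - L) < eps).

(* The summand is [/ G - / (G + D)] with [G = t + ln (k + 1/2)] and
   [D = H_k - ln (k + 1/2) - gamma].  The odd-power expansion of
   [ln ((1 + u) / (1 - u))] with [u = 1 / (2 m)] gives
   [1 / (24 (k + 1)^2) < D < 1 / (24 (k + 1/2)^2)], so the summand lies between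
   [f (k + 1) / 24] and [f (k + 1/2) / 24], where [f x = 1 / (x^2 (t + ln x)^2)].
   As [f] is decreasing and convex, [f (k + 1) >= int_(k+1)^(k+2) f] and
   [f (k + 1/2) <= int_k^(k+1) f]; summing compares the tails of the series with
   the tail integrals of [f], which are in turn squeezed between explicit
   functions whose derivatives bracket [- f]. *)

From Stdlib Require Import Reals Lra Lia Classical ClassicalEpsilon.
From Coquelicot Require Import Coquelicot.
Open Scope R_scope.

Lemma ln_1_plus_lt (x : R) : -1 < x -> x <> 0 -> ln (1 + x) < x.
Proof.
  intros Hx Hx0. rewrite <- (ln_exp x) at 2.
  apply ln_increasing; [lra | now apply exp_ineq1].
Qed.

Lemma ln_odd_lower (u : R) : 0 < u < 1 ->
  2 * u + 2 * u ^ 3 / 3 < ln (1 + u) - ln (1 - u).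
Proof.
  intros Hu.
  set (g x := ln (1 + x) - ln (1 - x) - 2 * x - 2 * x ^ 3 / 3).
  assert (Hg : forall x, 0 <= x <= u ->
    derivable_pt_lim g x (2 * x ^ 4 / (1 - x ^ 2))).
  { intros x Hx. apply is_derive_Reals. unfold g. auto_derive.
    - repeat split; lra.
    - field. split; nra. }
  destruct (MVT_cor2 g _ 0 u (proj1 Hu) Hg) as [c [Hgc Hc]].
  assert (0 < c ^ 4) by (apply pow_lt; lra).
  assert (0 < 1 - c ^ 2) by nra.
  assert (0 < 2 * c ^ 4 / (1 - c ^ 2) * (u - 0)).
  { apply Rmult_lt_0_compat; [apply Rdiv_lt_0_compat|]; lra. }
  unfold g in Hgc. rewrite Rplus_0_r, Rminus_0_r, ln_1 in Hgc. lra.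
Qed.

Lemma ln_odd_upper (u : R) : 0 < u < 1 ->
  ln (1 + u) - ln (1 - u) < 2 * u + 2 * u ^ 3 / (3 * (1 - u ^ 2)).
Proof.
  intros Hu.
  set (g x := 2 * x + 2 * x ^ 3 / (3 * (1 - x ^ 2)) - ln (1 + x) + ln (1 - x)).
  assert (Hg : forall x, 0 <= x <= u ->
    derivable_pt_lim g x (4 * x ^ 4 / (3 * (1 - x ^ 2) ^ 2))).
  { intros x Hx. apply is_derive_Reals. unfold g. auto_derive.
    - repeat split; nra.
    - field. split; nra. }
  destruct (MVT_cor2 g _ 0 u (proj1 Hu) Hg) as [c [Hgc Hc]].
  assert (0 < c ^ 4) by (apply pow_lt; lra).
  assert (0 < (1 - c ^ 2) ^ 2) by (apply pow_lt; nra).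
  assert (0 < 4 * c ^ 4 / (3 * (1 - c ^ 2) ^ 2) * (u - 0)).
  { apply Rmult_lt_0_compat; [apply Rdiv_lt_0_compat|]; lra. }
  unfold g in Hgc. rewrite Rplus_0_r, Rminus_0_r, ln_1 in Hgc.
  replace (2 * 0 + 2 * 0 ^ 3 / (3 * (1 - 0 ^ 2)) - 0 + 0) with 0 in Hgc by field.
  lra.
Qed.

Lemma ln_half_shift_bounds (m : R) : 1 <= m ->
  / (12 * m ^ 3) < ln (m + / 2) - ln (m - / 2) - / m /\
  ln (m + / 2) - ln (m - / 2) - / m < / (12 * m * (m ^ 2 - / 4)).
Proof.
  intros Hm. set (u := / (2 * m)).
  assert (Hu : 0 < u < 1).
  { unfold u. split; [apply Rinv_0_lt_compat; lra|].
    rewrite <- Rinv_1. apply Rinv_lt_contravar; lra. }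
  replace (m + / 2) with (m * (1 + u)) by (unfold u; field; lra).
  replace (m - / 2) with (m * (1 - u)) by (unfold u; field; lra).
  rewrite !ln_mult by lra.
  pose proof (ln_odd_lower u Hu). pose proof (ln_odd_upper u Hu).
  replace (/ m) with (2 * u) by (unfold u; field; lra).
  replace (/ (12 * m ^ 3)) with (2 * u ^ 3 / 3) by (unfold u; field; lra).
  replace (/ (12 * m * (m ^ 2 - / 4))) with (2 * u ^ 3 / (3 * (1 - u ^ 2))).
  - lra.
  - unfold u. field. split; [nra | lra].
Qed.

Lemma ln_succ_sub_half (x : R) : 0 <= x ->
  / (2 * (x + 1)) < ln (x + 1) - ln (x + / 2).
Proof.
  intros Hx.
  replace (x + / 2) with ((x + 1) * (1 + - / (2 * (x + 1)))) by (field; lra).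
  assert (0 < / (2 * (x + 1)) <= / 2).
  { split; [apply Rinv_0_lt_compat; lra|]. apply Rinv_le_contravar; lra. }
  rewrite ln_mult by lra.
  pose proof (ln_1_plus_lt (- / (2 * (x + 1))) ltac:(lra) ltac:(lra)). lra.
Qed.

Lemma harmonic_ge_ln (n : nat) : ln (INR n + 1) <= harmonic n.
Proof.
  induction n as [|n IH].
  - simpl. rewrite Rplus_0_l, ln_1. lra.
  - change (harmonic (S n)) with (harmonic n + / INR (S n)).
    rewrite !S_INR. pose proof (pos_INR n).
    assert (Hi : 0 < / (INR n + 1)) by (apply Rinv_0_lt_compat; lra).
    replace (INR n + 1 + 1) with ((INR n + 1) * (1 + / (INR n + 1))) by (field; lra).
    rewrite ln_mult by lra.
    pose proof (ln_1_plus_lt (/ (INR n + 1)) ltac:(lra) ltac:(lra)). lra.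
Qed.

Lemma Un_cv_const (c : R) : Un_cv (fun _ => c) c.
Proof.
  intros eps Heps. exists 0%nat. intros n _.
  unfold Rdist. rewrite Rminus_diag, Rabs_R0. lra.
Qed.

Lemma Un_cv_le_const (u : nat -> R) (l B : R) : Un_cv u l -> (forall n, u n <= B) -> l <= B.
Proof. intros Hu HB. exact (Rle_cv_lim HB Hu (Un_cv_const B)). Qed.

Lemma lt_sub_lim_of_increments_lt (a b : nat -> R) (la lb : R) :
  Un_cv a la -> Un_cv b lb ->
  (forall n, a n - a (S n) < b n - b (S n)) ->
  forall n, a n - la < b n - lb.
Proof.
  intros Ha Hb Hstep n.
  assert (Hdec : Un_decreasing (fun k => b k - a k)).
  { intro k. pose proof (Hstep k). lra. }
  pose proof (decreasing_ineq _ _ Hdec (CV_minus _ _ _ _ Hb Ha) (S n)).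
  pose proof (Hstep n). simpl in *. lra.
Qed.

Lemma is_lim_seq_inv_p_infty (u : nat -> R) :
  is_lim_seq u p_infty -> is_lim_seq (fun n => / u n) 0.
Proof. intros Hu. now apply (is_lim_seq_inv u p_infty). Qed.

Lemma is_lim_seq_INR_plus (c : R) : is_lim_seq (fun n => INR n + c) p_infty.
Proof.
  eapply is_lim_seq_plus; [apply is_lim_seq_INR | apply is_lim_seq_const | reflexivity].
Qed.

Lemma inv_sq_shift_cv (c : R) : Un_cv (fun n => / (24 * (INR n + c) ^ 2)) 0.
Proof.
  apply is_lim_seq_Reals, is_lim_seq_inv_p_infty.
  eapply is_lim_seq_mult; [apply is_lim_seq_const | |].
  - apply (is_lim_seq_ext (fun n => (INR n + c) * (INR n + c))); [intro; ring|].
    eapply is_lim_seq_mult; [apply is_lim_seq_INR_plus | apply is_lim_seq_INR_plus | reflexivity].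
  - apply is_Rbar_mult_sym, is_Rbar_mult_p_infty_pos. simpl. lra.
Qed.

Lemma ln_shift_sub_cv (c : R) : 0 < c ->
  is_lim_seq (fun n => ln (INR n + c) - ln (INR n)) 0.
Proof.
  intros Hc.
  apply (is_lim_seq_le_le_loc (fun _ => 0) _ (fun n => c * / INR n)).
  - exists 1%nat. intros n Hn.
    assert (HnR : 1 <= INR n) by (apply (le_INR 1); lia).
    assert (Hx : 0 < c * / INR n) by (apply Rmult_lt_0_compat; [lra | apply Rinv_0_lt_compat; lra]).
    replace (INR n + c) with (INR n * (1 + c * / INR n)) by (field; lra).
    rewrite ln_mult by lra.
    pose proof (ln_1_plus_lt (c * / INR n) ltac:(lra) ltac:(lra)).
    assert (0 < ln (1 + c * / INR n)) by (rewrite <- ln_1; apply ln_increasing; lra).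
    lra.
  - apply is_lim_seq_const.
  - replace (Finite 0) with (Finite (c * 0)) by (f_equal; ring).
    apply is_lim_seq_mult'; [apply is_lim_seq_const|].
    apply is_lim_seq_inv_p_infty, is_lim_seq_INR.
Qed.

(* The offset [1/2] makes [gamma_approx n - euler_gamma] of order [1/(24 n^2)]
   rather than [1/(2 n)]. *)
Definition gamma_approx (n : nat) : R := harmonic n - ln (INR n + / 2).

Lemma gamma_approx_step (n : nat) (m := INR n + 1) :
  gamma_approx n - gamma_approx (S n) = ln (m + / 2) - ln (m - / 2) - / m.
Proof.
  unfold gamma_approx, m. change (harmonic (S n)) with (harmonic n + / INR (S n)).
  rewrite S_INR. replace (INR n + 1 - / 2) with (INR n + / 2) by field. ring.
Qed.

Lemma gamma_approx_decreasing : Un_decreasing gamma_approx.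
Proof.
  intro n. pose proof (gamma_approx_step n). pose proof (pos_INR n).
  destruct (ln_half_shift_bounds (INR n + 1) ltac:(lra)) as [Hlo _].
  assert (0 < / (12 * (INR n + 1) ^ 3)).
  { apply Rinv_0_lt_compat, Rmult_lt_0_compat; [lra | apply pow_lt; lra]. }
  lra.
Qed.

Lemma gamma_approx_nonneg (n : nat) : 0 <= gamma_approx n.
Proof.
  unfold gamma_approx. pose proof (harmonic_ge_ln n). pose proof (pos_INR n).
  assert (ln (INR n + / 2) <= ln (INR n + 1)) by (apply ln_le; lra). lra.
Qed.

Lemma euler_gamma_spec : Un_cv (fun n => harmonic n - ln (INR n)) euler_gamma.
Proof.
  unfold euler_gamma. apply epsilon_spec.
  destruct (decreasing_cv _ gamma_approx_decreasing) as [l Hl].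
  { exists 0. intros x [n ->]. unfold opp_seq. pose proof (gamma_approx_nonneg n). lra. }
  exists l. replace l with (l + 0) by ring.
  pose proof (proj1 (is_lim_seq_Reals _ _) (ln_shift_sub_cv (/ 2) ltac:(lra))) as Hhalf.
  eapply Un_cv_ext; [|apply (CV_plus _ _ _ _ Hl Hhalf)].
  intro n. unfold gamma_approx. ring.
Qed.

Lemma gamma_approx_cv : Un_cv gamma_approx euler_gamma.
Proof.
  replace euler_gamma with (euler_gamma - 0) by ring.
  pose proof (proj1 (is_lim_seq_Reals _ _) (ln_shift_sub_cv (/ 2) ltac:(lra))) as Hhalf.
  eapply Un_cv_ext; [|apply (CV_minus _ _ _ _ euler_gamma_spec Hhalf)].
  intro n. unfold gamma_approx. ring.
Qed.

Lemma gamma_approx_upper (k : nat) :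
  gamma_approx k - euler_gamma < / (24 * (INR k + / 2) ^ 2).
Proof.
  rewrite <- (Rminus_0_r (/ (24 * (INR k + / 2) ^ 2))).
  apply (lt_sub_lim_of_increments_lt _ _ _ _ gamma_approx_cv (inv_sq_shift_cv (/ 2))).
  intro n. rewrite gamma_approx_step, S_INR.
  set (m := INR n + 1). pose proof (pos_INR n).
  destruct (ln_half_shift_bounds m ltac:(unfold m; lra)) as [_ Hup].
  replace (INR n + / 2) with (m - / 2) by (unfold m; field).
  replace (INR n + 1 + / 2) with (m + / 2) by (unfold m; field).
  assert (Hq : 0 < m ^ 2 - / 4) by (unfold m; nra).
  replace (/ (24 * (m - / 2) ^ 2) - / (24 * (m + / 2) ^ 2))
    with (/ (12 * m * (m ^ 2 - / 4)) * (m ^ 2 / (m ^ 2 - / 4))).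
  2:{ field. repeat split; unfold m in *; nra. }
  assert (1 <= m ^ 2 / (m ^ 2 - / 4)).
  { apply (Rmult_le_reg_r (m ^ 2 - / 4)); [lra|].
    unfold Rdiv. rewrite Rmult_assoc, Rinv_l by lra. lra. }
  assert (0 < / (12 * m * (m ^ 2 - / 4))).
  { apply Rinv_0_lt_compat. apply Rmult_lt_0_compat; [unfold m|]; lra. }
  nra.
Qed.

Lemma gamma_approx_lower (k : nat) :
  / (24 * (INR k + 1) ^ 2) < gamma_approx k - euler_gamma.
Proof.
  rewrite <- (Rminus_0_r (/ (24 * (INR k + 1) ^ 2))).
  apply (lt_sub_lim_of_increments_lt _ _ _ _ (inv_sq_shift_cv 1) gamma_approx_cv).
  intro n. rewrite gamma_approx_step, S_INR.
  set (m := INR n + 1). pose proof (pos_INR n).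
  destruct (ln_half_shift_bounds m ltac:(unfold m; lra)) as [Hlo _].
  replace (/ (24 * (INR n + 1 + 1) ^ 2)) with (/ (24 * (m + 1) ^ 2)) by reflexivity.
  replace (/ (12 * m ^ 3))
    with (/ (24 * m ^ 2) - / (24 * (m + 1) ^ 2) + (3 * m + 2) / (24 * m ^ 3 * (m + 1) ^ 2))
    in Hlo by (field; unfold m; lra).
  assert (0 < (3 * m + 2) / (24 * m ^ 3 * (m + 1) ^ 2)).
  { apply Rdiv_lt_0_compat; [unfold m; lra|].
    apply Rmult_lt_0_compat; [apply Rmult_lt_0_compat|]; try lra; apply pow_lt; unfold m; lra. }
  lra.
Qed.

Lemma inv_sub_inv_lt (G D : R) : 0 < G -> 0 < D -> / G - / (G + D) < D / G ^ 2.
Proof.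
  intros HG HD.
  replace (/ G - / (G + D)) with (D / (G * (G + D))) by (field; lra).
  assert (0 < G * G) by nra. assert (0 < G * D) by nra.
  apply Rmult_lt_compat_l; [lra|]. apply Rinv_lt_contravar; [|lra].
  apply Rmult_lt_0_compat; nra.
Qed.

Lemma inv_sub_inv_gt (G G' e D : R) : 0 < G -> 0 < e < D -> G + e <= G' ->
  e / G' ^ 2 < / G - / (G + D).
Proof.
  intros HG He HG'.
  replace (/ G - / (G + D)) with (D / (G * (G + D))) by (field; lra).
  assert (0 < G * G) by nra. assert (0 < G * e) by nra.
  apply Rle_lt_trans with (e / (G * (G + e))).
  - apply Rmult_le_compat_l; [lra|]. apply Rinv_le_contravar; [nra|].
    replace (G' ^ 2) with (G' * G') by ring. apply Rmult_le_compat; lra.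
  - apply (Rmult_lt_reg_r (G * (G + e) * (G * (G + D)))); [apply Rmult_lt_0_compat; nra|].
    replace (e / (G * (G + e)) * (G * (G + e) * (G * (G + D)))) with (e * (G * (G + D)))
      by (field; lra).
    replace (D / (G * (G + D)) * (G * (G + e) * (G * (G + D)))) with (D * (G * (G + e)))
      by (field; lra).
    nra.
Qed.

Lemma eta_term_bounds (t : R) (k : nat) : 0 < t + ln (INR k + / 2) ->
  eta_integrand t (INR k + 1) / 24 < eta_term t k /\
  eta_term t k < eta_integrand t (INR k + / 2) / 24.
Proof.
  intros HG. pose proof (pos_INR k).
  pose proof (gamma_approx_upper k). pose proof (gamma_approx_lower k).
  set (G := t + ln (INR k + / 2)) in *.
  set (D := gamma_approx k - euler_gamma) in *.
  assert (Hterm : eta_term t k = / G - / (G + D)).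
  { unfold eta_term, G, D, gamma_approx. f_equal. f_equal. ring. }
  assert (He : 0 < / (24 * (INR k + 1) ^ 2)).
  { apply Rinv_0_lt_compat, Rmult_lt_0_compat; [lra | apply pow_lt; lra]. }
  rewrite Hterm. unfold eta_integrand. fold G. split.
  - pose proof (ln_succ_sub_half (INR k) ltac:(lra)).
    assert (/ (24 * (INR k + 1) ^ 2) <= / (2 * (INR k + 1))).
    { apply Rinv_le_contravar; nra. }
    replace (/ ((INR k + 1) ^ 2 * (t + ln (INR k + 1)) ^ 2) / 24)
      with (/ (24 * (INR k + 1) ^ 2) / (t + ln (INR k + 1)) ^ 2).
    + apply inv_sub_inv_gt; unfold G in *; lra.
    + field. split; [|lra]. unfold G in HG. lra.
  - replace (/ ((INR k + / 2) ^ 2 * G ^ 2) / 24) with (/ (24 * (INR k + / 2) ^ 2) / G ^ 2)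
      by (field; lra).
    eapply Rlt_trans; [apply inv_sub_inv_lt; lra|].
    apply Rmult_lt_compat_r; [apply Rinv_0_lt_compat, pow_lt|]; lra.
Qed.

Lemma RInt_le_primitive (f g F : R -> R) (a b : R) : a <= b -> ex_RInt f a b ->
  (forall x, a <= x <= b -> is_derive F x (g x)) ->
  (forall x, a <= x <= b -> continuous g x) ->
  (forall x, a < x < b -> f x <= g x) ->
  RInt f a b <= F b - F a.
Proof.
  intros Hab Hf HF Hg Hfg.
  assert (HI : is_RInt g a b (F b - F a)).
  { apply (is_RInt_derive F g); rewrite Rmin_left, Rmax_right; auto. }
  rewrite <- (is_RInt_unique _ _ _ _ HI).
  apply RInt_le; [lra | exact Hf | eexists; exact HI | exact Hfg].
Qed.

Lemma primitive_le_RInt (f g F : R -> R) (a b : R) : a <= b -> ex_RInt f a b ->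
  (forall x, a <= x <= b -> is_derive F x (g x)) ->
  (forall x, a <= x <= b -> continuous g x) ->
  (forall x, a < x < b -> g x <= f x) ->
  F b - F a <= RInt f a b.
Proof.
  intros Hab Hf HF Hg Hfg.
  assert (HI : is_RInt g a b (F b - F a)).
  { apply (is_RInt_derive F g); rewrite Rmin_left, Rmax_right; auto. }
  rewrite <- (is_RInt_unique _ _ _ _ HI).
  apply RInt_le; [lra | eexists; exact HI | exact Hf | exact Hfg].
Qed.

Lemma RInt_le_length_mul (f : R -> R) (a b : R) : a <= b -> ex_RInt f a b ->
  (forall x, a <= x <= b -> f x <= f a) ->
  RInt f a b <= (b - a) * f a.
Proof.
  intros Hab Hf Hdec.
  replace ((b - a) * f a) with (RInt (fun _ => f a) a b) by (rewrite RInt_const; reflexivity).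
  apply RInt_le; [lra | exact Hf | apply ex_RInt_const |].
  intros x Hx. apply Hdec. lra.
Qed.

Lemma tangent_le (f f' : R -> R) (a b c x : R) :
  (forall y, a <= y <= b -> derivable_pt_lim f y (f' y)) ->
  (forall y z, a <= y -> y <= z -> z <= b -> f' y <= f' z) ->
  a <= c <= b -> a <= x <= b ->
  f c + f' c * (x - c) <= f x.
Proof.
  intros Hd Hmono Hc Hx.
  destruct (Rtotal_order x c) as [Hlt | [-> | Hgt]].
  - destruct (MVT_cor2 f f' x c Hlt (fun z Hz => Hd z ltac:(lra))) as [z [Hz Hzr]].
    assert (f' z * (c - x) <= f' c * (c - x)).
    { apply Rmult_le_compat_r; [lra|]. apply Hmono; lra. }
    lra.
  - lra.
  - destruct (MVT_cor2 f f' c x Hgt (fun z Hz => Hd z ltac:(lra))) as [z [Hz Hzr]].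
    assert (f' c * (x - c) <= f' z * (x - c)).
    { apply Rmult_le_compat_r; [lra|]. apply Hmono; lra. }
    lra.
Qed.

(* The left Hermite-Hadamard inequality: integrate the tangent line at the
   midpoint, which lies below the convex function [f]. *)
Lemma midpoint_le_RInt (f f' : R -> R) (a b : R) : a <= b ->
  (forall x, a <= x <= b -> is_derive f x (f' x)) ->
  (forall x y, a <= x -> x <= y -> y <= b -> f' x <= f' y) ->
  (b - a) * f ((a + b) / 2) <= RInt f a b.
Proof.
  intros Hab Hd Hmono. set (c := (a + b) / 2).
  set (line x := f c + f' c * (x - c)).
  assert (HI : is_RInt line a b ((b - a) * f c)).
  { set (P x := f c * x + f' c * (x - c) ^ 2 / 2).
    replace ((b - a) * f c) with (minus (P b) (P a))
      by (unfold P, c, minus, plus, opp; simpl; field).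
    apply (is_RInt_derive P line).
    - intros x _. unfold P, line. auto_derive; [exact I | field].
    - intros x _. unfold line. apply (ex_derive_continuous (fun x => f c + f' c * (x - c))).
      auto_derive. exact I. }
  assert (Hf : ex_RInt f a b).
  { apply (ex_RInt_continuous (V := R_CompleteNormedModule)).
    rewrite Rmin_left, Rmax_right by lra. intros z Hz.
    apply (ex_derive_continuous (V := R_CompleteNormedModule)). eexists. now apply Hd. }
  rewrite <- (is_RInt_unique _ _ _ _ HI).
  apply RInt_le; [exact Hab | eexists; exact HI | exact Hf |].
  intros x Hx. unfold line.
  apply (tangent_le f f' a b); [|exact Hmono|unfold c; lra|lra].
  intros y Hy. apply is_derive_Reals. now apply Hd.
Qed.

Lemma RInt_nonneg_mono_r (f : R -> R) (a b c : R) :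
  (forall x, a <= x -> 0 <= f x) -> (forall x, a <= x -> ex_RInt f a x) ->
  a <= b -> b <= c -> RInt f a b <= RInt f a c.
Proof.
  intros Hpos Hint Hab Hbc.
  assert (Hbc' : ex_RInt f b c).
  { apply (ex_RInt_Chasles_2 f a); [lra | apply Hint; lra]. }
  rewrite <- (RInt_Chasles f a b c); [|apply Hint; lra | exact Hbc'].
  assert (0 <= RInt f b c) by (apply RInt_ge_0; auto; intros x Hx; apply Hpos; lra).
  unfold plus. simpl. lra.
Qed.

Definition partial_integrals (f : R -> R) (a : R) : R -> Prop :=
  fun y => exists b, a <= b /\ y = RInt f a b.

Lemma improper_integral_of_nonneg (f : R -> R) (a B : R) :
  (forall b, a <= b -> ex_RInt f a b) ->
  (forall x, a <= x -> 0 <= f x) ->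
  (forall b, a <= b -> RInt f a b <= B) ->
  exists L, improper_integral_to f a L /\ is_lub (partial_integrals f a) L.
Proof.
  intros Hint Hpos HB.
  destruct (completeness (partial_integrals f a)) as [L [Hub Hleast]].
  { exists B. intros y [b [Hab ->]]. auto. }
  { exists (RInt f a a), a. split; [lra | reflexivity]. }
  exists L. split; [split | split; assumption].
  - intros b Hab. constructor. apply ex_RInt_Reals_0. auto.
  - intros eps Heps.
    assert (Hnot : ~ is_upper_bound (partial_integrals f a) (L - eps))
      by (intro H; specialize (Hleast _ H); lra).
    apply not_all_ex_not in Hnot as [y Hy].
    apply imply_to_and in Hy as [[b0 [Hb0 ->]] Hy].
    exists b0. intros b pr Hb. rewrite <- (RInt_Reals f a b pr).
    assert (RInt f a b0 <= RInt f a b) by (apply RInt_nonneg_mono_r; auto; lra).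
    assert (RInt f a b <= L) by (apply Hub; exists b; split; [lra | reflexivity]).
    rewrite Rabs_left1; lra.
Qed.

Ltac pos_factors :=
  repeat (apply Rmult_lt_0_compat || apply Rinv_0_lt_compat || apply pow_lt); try lra.

Ltac derive_side :=
  repeat split; try lra; try (apply Rgt_not_eq; pos_factors); try pos_factors.

Lemma pow_mul_pow_le (x y a b : R) (p q : nat) : 0 < x <= y -> 0 < a <= b ->
  x ^ p * a ^ q <= y ^ p * b ^ q.
Proof.
  intros Hxy Hab. apply Rmult_le_compat; try (apply pow_le; lra); apply pow_incr; lra.
Qed.

Definition log_domain (t x : R) : Prop := 0 < x /\ 0 < t + ln x.

Lemma log_domain_le (t x y : R) : log_domain t x -> x <= y -> log_domain t y.
Proof.
  intros [Hx Hl] Hxy. split; [lra|].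
  assert (ln x <= ln y) by (apply ln_le; lra). lra.
Qed.

(* With [G = t + ln x], the derivatives of [tail_upper] and [tail_lower] are
   [- f - 2 / (x^2 G^3)] and [- f + 6 / (x^2 G^4)] for [f = eta_integrand t],
   so they bound the integral of [f] over [[x, +oo)] from above and below. *)
Definition tail_upper (t x : R) : R := / (x * (t + ln x) ^ 2).

Definition tail_lower (t x : R) : R := tail_upper t x - 2 / (x * (t + ln x) ^ 3).

Definition eta_integrand_derive (t x : R) : R :=
  - 2 / (x ^ 3 * (t + ln x) ^ 2) - 2 / (x ^ 3 * (t + ln x) ^ 3).

Section Integrand.

Variable t : R.

Notation f := (eta_integrand t).

Lemma is_derive_eta_integrand (x : R) : log_domain t x ->
  is_derive (eta_integrand t) x (eta_integrand_derive t x).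
Proof.
  intros [Hx Hl]. unfold eta_integrand, eta_integrand_derive.
  auto_derive; derive_side. field. derive_side.
Qed.

Lemma eta_integrand_pos (x : R) : log_domain t x -> 0 < eta_integrand t x.
Proof. intros [Hx Hl]. unfold eta_integrand. pos_factors. Qed.

Lemma eta_integrand_antitone (x y : R) : log_domain t x -> x <= y ->
  eta_integrand t y <= eta_integrand t x.
Proof.
  intros Hx Hxy. pose proof (log_domain_le _ _ _ Hx Hxy) as [Hy Hly]. destruct Hx as [Hx Hlx].
  assert (ln x <= ln y) by (apply ln_le; lra).
  unfold eta_integrand. apply Rinv_le_contravar; [pos_factors | apply pow_mul_pow_le; lra].
Qed.

Lemma eta_integrand_derive_mono (x y : R) : log_domain t x -> x <= y ->
  eta_integrand_derive t x <= eta_integrand_derive t y.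
Proof.
  intros Hx Hxy. pose proof (log_domain_le _ _ _ Hx Hxy) as [Hy Hly]. destruct Hx as [Hx Hlx].
  assert (ln x <= ln y) by (apply ln_le; lra).
  assert (/ (y ^ 3 * (t + ln y) ^ 2) <= / (x ^ 3 * (t + ln x) ^ 2)).
  { apply Rinv_le_contravar; [pos_factors | apply pow_mul_pow_le; lra]. }
  assert (/ (y ^ 3 * (t + ln y) ^ 3) <= / (x ^ 3 * (t + ln x) ^ 3)).
  { apply Rinv_le_contravar; [pos_factors | apply pow_mul_pow_le; lra]. }
  unfold eta_integrand_derive, Rdiv. lra.
Qed.

Lemma ex_RInt_eta_integrand (a b : R) : log_domain t a -> a <= b ->
  ex_RInt (eta_integrand t) a b.
Proof.
  intros Ha Hab. apply (ex_RInt_continuous (V := R_CompleteNormedModule)).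
  rewrite Rmin_left, Rmax_right by lra. intros z Hz.
  apply (ex_derive_continuous (V := R_CompleteNormedModule)).
  eexists. apply is_derive_eta_integrand, (log_domain_le _ a); [exact Ha | lra].
Qed.

Lemma RInt_eta_integrand_le_tail_upper (a b : R) : log_domain t a -> a <= b ->
  RInt (eta_integrand t) a b <= tail_upper t a - tail_upper t b.
Proof.
  intros Ha Hab.
  replace (tail_upper t a - tail_upper t b)
    with (- tail_upper t b - - tail_upper t a) by ring.
  apply (RInt_le_primitive _ (fun x => eta_integrand t x + 2 / (x ^ 2 * (t + ln x) ^ 3))
      (fun x => - tail_upper t x));
    [exact Hab | now apply ex_RInt_eta_integrand | | |];
    intros x Hx; destruct (log_domain_le t a x Ha ltac:(lra)) as [H1 H2].
  - unfold tail_upper, eta_integrand. auto_derive; derive_side. field. derive_side.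
  - apply (ex_derive_continuous (V := R_CompleteNormedModule)).
    unfold eta_integrand. auto_derive. derive_side.
  - assert (0 < 2 / (x ^ 2 * (t + ln x) ^ 3)) by (unfold Rdiv; pos_factors). lra.
Qed.

Lemma tail_lower_le_RInt_eta_integrand (a b : R) : log_domain t a -> a <= b ->
  tail_lower t a - tail_lower t b <= RInt (eta_integrand t) a b.
Proof.
  intros Ha Hab.
  replace (tail_lower t a - tail_lower t b)
    with (- tail_lower t b - - tail_lower t a) by ring.
  apply (primitive_le_RInt _ (fun x => eta_integrand t x - 6 / (x ^ 2 * (t + ln x) ^ 4))
      (fun x => - tail_lower t x));
    [exact Hab | now apply ex_RInt_eta_integrand | | |];
    intros x Hx; destruct (log_domain_le t a x Ha ltac:(lra)) as [H1 H2].
  - unfold tail_lower, tail_upper, eta_integrand. auto_derive; derive_side. field. derive_side.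
  - apply (ex_derive_continuous (V := R_CompleteNormedModule)).
    unfold eta_integrand. auto_derive. derive_side.
  - assert (0 < 6 / (x ^ 2 * (t + ln x) ^ 4)) by (unfold Rdiv; pos_factors). lra.
Qed.

Lemma eta_integrand_mid_le_RInt (a : R) : log_domain t a ->
  eta_integrand t (a + / 2) <= RInt (eta_integrand t) a (a + 1).
Proof.
  intros Ha.
  replace (eta_integrand t (a + / 2)) with ((a + 1 - a) * eta_integrand t ((a + (a + 1)) / 2)).
  2:{ replace ((a + (a + 1)) / 2) with (a + / 2) by field. ring. }
  apply (midpoint_le_RInt _ (eta_integrand_derive t)); [lra | |].
  - intros x Hx. apply is_derive_eta_integrand, (log_domain_le _ a); [exact Ha | lra].
  - intros x y Hx Hxy _. apply eta_integrand_derive_mono; [|exact Hxy].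
    apply (log_domain_le _ a); [exact Ha | lra].
Qed.

Lemma RInt_eta_integrand_succ_le (a : R) : log_domain t a ->
  RInt (eta_integrand t) a (a + 1) <= eta_integrand t a.
Proof.
  intros Ha. replace (eta_integrand t a) with ((a + 1 - a) * eta_integrand t a) by ring.
  apply RInt_le_length_mul; [lra | apply ex_RInt_eta_integrand; [exact Ha | lra] |].
  intros x Hx. apply eta_integrand_antitone; [exact Ha | lra].
Qed.

Lemma tail_upper_pos (x : R) : log_domain t x -> 0 < tail_upper t x.
Proof. intros [Hx Hl]. unfold tail_upper. pos_factors. Qed.

Lemma tail_lower_lt_tail_upper (x : R) : log_domain t x -> tail_lower t x < tail_upper t x.
Proof.
  intros [Hx Hl]. unfold tail_lower.
  assert (0 < 2 / (x * (t + ln x) ^ 3)) by (unfold Rdiv; pos_factors). lra.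
Qed.

Lemma tail_upper_small (a eps : R) : log_domain t a -> 0 < eps ->
  exists b, a <= b /\ tail_upper t b < eps.
Proof.
  intros Ha Heps. pose proof Ha as [Ha0 Hc]. set (c := t + ln a) in *.
  set (b := a + / (eps * c ^ 2)).
  assert (Hd : 0 < / (eps * c ^ 2)) by pos_factors.
  exists b. split; [unfold b; lra|].
  destruct (log_domain_le t a b Ha ltac:(unfold b; lra)) as [Hb Hlb].
  assert (ln a <= ln b) by (apply ln_le; unfold b; lra).
  apply Rle_lt_trans with (/ (b * c ^ 2)).
  - unfold tail_upper. apply Rinv_le_contravar; [pos_factors|].
    apply Rmult_le_compat_l; [lra|]. apply pow_incr. unfold c in *. lra.
  - replace eps with (/ (/ (eps * c ^ 2) * c ^ 2)) by (field; split; lra).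
    apply Rinv_lt_contravar; [pos_factors|]. apply Rmult_lt_compat_r; [pos_factors | unfold b; lra].
Qed.

Lemma eta_integrand_improper (a : R) : log_domain t a ->
  exists I, improper_integral_to f a I /\ is_lub (partial_integrals f a) I.
Proof.
  intros Ha. apply (improper_integral_of_nonneg f a (tail_upper t a)).
  - intros b Hb. now apply ex_RInt_eta_integrand.
  - intros x Hx. left. apply eta_integrand_pos, (log_domain_le _ a); auto.
  - intros b Hb. pose proof (RInt_eta_integrand_le_tail_upper a b Ha Hb).
    pose proof (tail_upper_pos b (log_domain_le _ a b Ha Hb)). lra.
Qed.

Lemma tail_integral_bounds (a I : R) : log_domain t a -> is_lub (partial_integrals f a) I ->
  tail_lower t a <= I <= tail_upper t a.
Proof.
  intros Ha [Hub Hleast]. split.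
  - apply le_epsilon. intros eps Heps.
    destruct (tail_upper_small a eps Ha Heps) as [b [Hab Hb]].
    pose proof (tail_lower_le_RInt_eta_integrand a b Ha Hab).
    pose proof (tail_lower_lt_tail_upper b (log_domain_le _ a b Ha Hab)).
    assert (RInt f a b <= I) by (apply Hub; exists b; split; [lra | reflexivity]).
    lra.
  - apply Hleast. intros y [b [Hab ->]].
    pose proof (RInt_eta_integrand_le_tail_upper a b Ha Hab).
    pose proof (tail_upper_pos b (log_domain_le _ a b Ha Hab)). lra.
Qed.

End Integrand.

Definition admissible (t : R) (N : nat) : Prop := (1 <= N)%nat /\ 0 < t + ln (INR N).

Section Eta.

Variable t : R.

Notation f := (eta_integrand t).

Lemma admissible_le (N n : nat) : admissible t N -> (N <= n)%nat -> admissible t n.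
Proof.
  intros [HN Hl] Hn. split; [lia|].
  assert (1 <= INR N) by (apply (le_INR 1); lia).
  assert (INR N <= INR n) by (apply le_INR; lia).
  assert (ln (INR N) <= ln (INR n)) by (apply ln_le; lra). lra.
Qed.

Lemma admissible_log_domain (n : nat) : admissible t n -> log_domain t (INR n).
Proof. intros [Hn Hl]. split; [apply (lt_INR 0); lia | exact Hl]. Qed.

Lemma admissible_log_domain_succ (n : nat) : admissible t n -> log_domain t (INR n + 1).
Proof. intros Hn. apply (log_domain_le _ (INR n)); [now apply admissible_log_domain | lra]. Qed.

Lemma admissible_half (n : nat) : admissible t n -> 0 < t + ln (INR n + / 2).
Proof.
  intros Hn. destruct (log_domain_le t (INR n) (INR n + / 2)) as [_ H];
    [now apply admissible_log_domain | lra | exact H].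
Qed.

Lemma eta_term_lt_RInt (k : nat) : admissible t k ->
  24 * eta_term t k < RInt f (INR k) (INR k + 1).
Proof.
  intros Hk. destruct (eta_term_bounds t k (admissible_half k Hk)) as [_ H].
  pose proof (eta_integrand_mid_le_RInt t (INR k) (admissible_log_domain k Hk)). lra.
Qed.

Lemma RInt_lt_eta_term (k : nat) : admissible t k ->
  RInt f (INR k + 1) (INR k + 2) < 24 * eta_term t k.
Proof.
  intros Hk. destruct (eta_term_bounds t k (admissible_half k Hk)) as [H _].
  pose proof (RInt_eta_integrand_succ_le t (INR k + 1) (admissible_log_domain_succ k Hk)).
  replace (INR k + 1 + 1) with (INR k + 2) in * by ring. lra.
Qed.

Lemma eta_term_pos (k : nat) : admissible t k -> 0 < eta_term t k.
Proof.
  intros Hk. destruct (eta_term_bounds t k (admissible_half k Hk)) as [H _].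
  pose proof (eta_integrand_pos t _ (admissible_log_domain_succ k Hk)). lra.
Qed.

Lemma eta_partial_lt (N m : nat) : (m < N)%nat -> eta_partial t N m = 0.
Proof.
  induction m as [|m IH]; intros Hm; simpl.
  - destruct (N <=? 0)%nat eqn:E; [apply Nat.leb_le in E; lia | reflexivity].
  - rewrite IH by lia. destruct (N <=? S m)%nat eqn:E; [apply Nat.leb_le in E; lia | ring].
Qed.

Lemma eta_partial_S (N m : nat) : (N <= S m)%nat ->
  eta_partial t N (S m) = eta_partial t N m + eta_term t (S m).
Proof. intros H. simpl. apply Nat.leb_le in H. now rewrite H. Qed.

Lemma eta_partial_diag (N : nat) : eta_partial t N N = eta_term t N.
Proof.
  destruct N as [|N]; [reflexivity|].
  rewrite eta_partial_S, eta_partial_lt by lia. ring.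
Qed.

Lemma eta_partial_split (N n m : nat) : (N <= S n)%nat -> (n <= m)%nat ->
  eta_partial t N m = eta_partial t N n + eta_partial t (S n) m.
Proof.
  intros HN. induction m as [|m IH]; intros Hm.
  - replace n with 0%nat by lia. rewrite (eta_partial_lt 1 0) by lia. ring.
  - destruct (Nat.eq_dec n (S m)) as [<- | Hne].
    + rewrite (eta_partial_lt (S n) n) by lia. ring.
    + rewrite !eta_partial_S by lia. rewrite IH by lia. ring.
Qed.

Lemma eta_partial_growing (N : nat) : admissible t N -> Un_growing (eta_partial t N).
Proof.
  intros HN n. simpl. destruct (N <=? S n)%nat eqn:E; [|lra].
  apply Nat.leb_le in E. pose proof (eta_term_pos (S n) (admissible_le N _ HN E)). lra.
Qed.

Lemma eta_partial_le_RInt (n j : nat) : admissible t n ->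
  24 * eta_partial t n (n + j) <= RInt f (INR n) (INR (n + j) + 1).
Proof.
  intros Hn. induction j as [|j IH].
  - rewrite Nat.add_0_r, eta_partial_diag. left. now apply eta_term_lt_RInt.
  - rewrite Nat.add_succ_r, eta_partial_S, S_INR by lia.
    pose proof (pos_INR (n + j)). pose proof (pos_INR n).
    assert (INR n <= INR (n + j)) by (apply le_INR; lia).
    rewrite <- (RInt_Chasles f (INR n) (INR (n + j) + 1));
      try (apply ex_RInt_eta_integrand; [apply (log_domain_le _ (INR n)) | ];
           [now apply admissible_log_domain | lra | lra]).
    pose proof (eta_term_lt_RInt (S (n + j)) (admissible_le n (S (n + j)) Hn ltac:(lia))).
    rewrite S_INR in *. unfold plus. simpl. lra.
Qed.

Lemma RInt_le_eta_partial (n j : nat) : admissible t n ->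
  RInt f (INR n + 1) (INR (n + j) + 2) <= 24 * eta_partial t n (n + j).
Proof.
  intros Hn. induction j as [|j IH].
  - rewrite Nat.add_0_r, eta_partial_diag. left. now apply RInt_lt_eta_term.
  - rewrite Nat.add_succ_r, eta_partial_S, S_INR by lia.
    assert (INR n <= INR (n + j)) by (apply le_INR; lia).
    rewrite <- (RInt_Chasles f (INR n + 1) (INR (n + j) + 2));
      try (apply ex_RInt_eta_integrand; [apply (log_domain_le _ (INR n + 1)) | ];
           [now apply admissible_log_domain_succ | lra | lra]).
    pose proof (RInt_lt_eta_term (S (n + j)) (admissible_le n (S (n + j)) Hn ltac:(lia))).
    rewrite S_INR in *. replace (INR (n + j) + 1 + 1) with (INR (n + j) + 2) in * by ring.
    unfold plus. simpl. lra.
Qed.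

Lemma eta_partial_bounded (N m : nat) : admissible t N ->
  24 * eta_partial t N m <= tail_upper t (INR N).
Proof.
  intros HN. pose proof (admissible_log_domain N HN) as HdN.
  pose proof (tail_upper_pos t _ HdN).
  destruct (Nat.lt_ge_cases m N) as [Hm | Hm].
  - rewrite eta_partial_lt by exact Hm. lra.
  - replace m with (N + (m - N))%nat by lia.
    eapply Rle_trans; [now apply eta_partial_le_RInt|].
    assert (INR N <= INR (N + (m - N))) by (apply le_INR; lia).
    assert (Hb : INR N <= INR (N + (m - N)) + 1) by lra.
    pose proof (RInt_eta_integrand_le_tail_upper t _ _ HdN Hb).
    pose proof (tail_upper_pos t _ (log_domain_le _ _ _ HdN Hb)). lra.
Qed.

Lemma eta_cv (N : nat) : admissible t N -> Un_cv (eta_partial t N) (eta t N).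
Proof.
  intros HN. unfold eta. apply epsilon_spec.
  destruct (growing_cv _ (eta_partial_growing N HN)) as [l Hl].
  - exists (tail_upper t (INR N) / 24). intros x [m ->].
    pose proof (eta_partial_bounded N m HN). lra.
  - exists l. exact Hl.
Qed.

Lemma eta_partial_le_eta (N m : nat) : admissible t N -> eta_partial t N m <= eta t N.
Proof. intros HN. apply growing_ineq; [apply eta_partial_growing | apply eta_cv]; exact HN. Qed.

Lemma eta_partial_pos (N n : nat) : admissible t N -> (N <= n)%nat -> 0 < eta_partial t N n.
Proof.
  intros HN Hn. pose proof (eta_term_pos N HN).
  assert (forall j, eta_term t N <= eta_partial t N (N + j)).
  { induction j as [|j IH]; [rewrite Nat.add_0_r, eta_partial_diag; lra|].
    rewrite Nat.add_succ_r. pose proof (eta_partial_growing N HN (N + j)%nat). lra. }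
  replace n with (N + (n - N))%nat by lia. specialize (H0 (n - N)%nat). lra.
Qed.

Lemma eta_pos (N : nat) : admissible t N -> 0 < eta t N.
Proof.
  intros HN. pose proof (eta_partial_pos N N HN (le_n N)).
  pose proof (eta_partial_le_eta N N HN). lra.
Qed.

Lemma eta_split (N n : nat) : admissible t N -> (N <= S n)%nat ->
  eta t N - eta_partial t N n = eta t (S n).
Proof.
  intros HN Hn. apply (UL_sequence (eta_partial t (S n)));
    [|apply eta_cv, (admissible_le N); auto].
  intros eps Heps. destruct (eta_cv N HN eps Heps) as [M HM]. exists (max M n). intros k Hk.
  specialize (HM k ltac:(lia)).
  rewrite (eta_partial_split N n k Hn ltac:(lia)) in HM. unfold Rdist in *.
  replace (eta_partial t (S n) k - (eta t N - eta_partial t N n))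
    with (eta_partial t N n + eta_partial t (S n) k - eta t N) by ring.
  exact HM.
Qed.

Lemma eta_succ (n : nat) : admissible t n -> eta t n = eta_term t n + eta t (S n).
Proof.
  intros Hn. pose proof (eta_split n n Hn (Nat.le_succ_diag_r n)).
  rewrite eta_partial_diag in H. lra.
Qed.

Lemma eta_sub_partial_pred (N n : nat) : admissible t N -> (N <= n)%nat ->
  eta t N - eta_partial t N (n - 1) = eta t n.
Proof.
  intros HN Hn. destruct n as [|n]; [destruct HN; lia|].
  rewrite Nat.sub_succ, Nat.sub_0_r. now apply eta_split.
Qed.

Lemma eta_le_tail_integral (n : nat) (I : R) : admissible t n ->
  is_lub (partial_integrals f (INR n)) I -> 24 * eta t n <= I.
Proof.
  intros Hn [Hub _].
  assert (Hm : forall m, 24 * eta_partial t n m <= I).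
  { intro m. destruct (Nat.lt_ge_cases m n) as [Hm | Hm].
    - rewrite eta_partial_lt by exact Hm.
      assert (RInt f (INR n) (INR n) <= I)
        by (apply Hub; exists (INR n); split; [lra | reflexivity]).
      rewrite RInt_point in H. unfold zero in H. simpl in H. lra.
    - replace m with (n + (m - n))%nat by lia.
      eapply Rle_trans; [now apply eta_partial_le_RInt|].
      apply Hub. eexists. split; [|reflexivity].
      assert (INR n <= INR (n + (m - n))) by (apply le_INR; lia). lra. }
  apply (Un_cv_le_const (fun m => 24 * eta_partial t n m)); [|exact Hm].
  apply CV_mult; [apply Un_cv_const | now apply eta_cv].
Qed.

Lemma tail_integral_le_eta (n : nat) (I : R) : admissible t n ->
  is_lub (partial_integrals f (INR n + 1)) I -> I <= 24 * eta t n.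
Proof.
  intros Hn [_ Hleast]. apply Hleast. intros y [b [Hb ->]].
  destruct (INR_unbounded b) as [j Hj].
  assert (Hnj : INR j <= INR (n + j)) by (apply le_INR; lia).
  apply Rle_trans with (RInt f (INR n + 1) (INR (n + j) + 2)).
  - apply RInt_nonneg_mono_r; [| | lra | lra].
    + intros x Hx. left. apply eta_integrand_pos, (log_domain_le _ (INR n + 1)); auto.
      now apply admissible_log_domain_succ.
    + intros x Hx. apply ex_RInt_eta_integrand; [now apply admissible_log_domain_succ | lra].
  - eapply Rle_trans; [now apply RInt_le_eta_partial|].
    pose proof (eta_partial_le_eta n (n + j) Hn). lra.
Qed.

Lemma eta_between_tail_integrals (n : nat) : admissible t n ->
  exists I1 I2,
    improper_integral_to f (INR n + 1) I1 /\ improper_integral_to f (INR n) I2 /\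
    / 24 * I1 <= eta t n <= / 24 * I2.
Proof.
  intros Hn.
  destruct (eta_integrand_improper t _ (admissible_log_domain_succ n Hn)) as [I1 [HI1 Hlub1]].
  destruct (eta_integrand_improper t _ (admissible_log_domain n Hn)) as [I2 [HI2 Hlub2]].
  exists I1, I2. split; [exact HI1 | split; [exact HI2|]].
  pose proof (tail_integral_le_eta n I1 Hn Hlub1).
  pose proof (eta_le_tail_integral n I2 Hn Hlub2). lra.
Qed.

(* Split off the first summand: it is compared with [f] on [[n, n + 1]]
   resp. [[n + 1, n + 2]], the rest with the tail integral from [n + 1]
   resp. [n + 2]. *)
Lemma eta_between_tail_primitives (n : nat) : admissible t n ->
  tail_lower t (INR n + 1) / 24 < eta t n < tail_upper t (INR n) / 24.
Proof.
  intros Hn. pose proof (admissible_le n (S n) Hn (Nat.le_succ_diag_r n)) as Hn1.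
  pose proof (admissible_log_domain n Hn) as Hd0.
  pose proof (admissible_log_domain_succ n Hn) as Hd1.
  pose proof (admissible_log_domain_succ (S n) Hn1) as Hd2. rewrite S_INR in Hd2.
  destruct (eta_integrand_improper t _ Hd1) as [I1 [_ Hlub1]].
  destruct (eta_integrand_improper t _ Hd2) as [I2 [_ Hlub2]].
  pose proof (tail_integral_bounds t _ _ Hd1 Hlub1).
  pose proof (tail_integral_bounds t _ _ Hd2 Hlub2).
  rewrite <- S_INR in Hlub1. pose proof (eta_le_tail_integral (S n) I1 Hn1 Hlub1).
  rewrite <- S_INR in Hlub2. pose proof (tail_integral_le_eta (S n) I2 Hn1 Hlub2).
  pose proof (eta_term_lt_RInt n Hn). pose proof (RInt_lt_eta_term n Hn).
  pose proof (RInt_eta_integrand_le_tail_upper t _ (INR n + 1) Hd0 ltac:(lra)).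
  pose proof (tail_lower_le_RInt_eta_integrand t _ (INR n + 1 + 1) Hd1 ltac:(lra)).
  replace (INR n + 1 + 1) with (INR n + 2) in * by ring.
  rewrite (eta_succ n Hn). lra.
Qed.

Lemma eta_tail_bounds (n : nat) : admissible t n ->
  / (24 * (INR n + 1) * (t + ln (INR n + 1)) ^ 2)
    - / (12 * (INR n + 1) * (t + ln (INR n + 1)) ^ 3) < eta t n /\
  eta t n < / (24 * INR n * (t + ln (INR n)) ^ 2).
Proof.
  intros Hn. destruct (eta_between_tail_primitives n Hn) as [Hlo Hhi].
  destruct (admissible_log_domain n Hn) as [H0 H1].
  destruct (admissible_log_domain_succ n Hn) as [H2 H3].
  unfold tail_lower, tail_upper in *. split.
  - replace (/ (24 * (INR n + 1) * (t + ln (INR n + 1)) ^ 2)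
             - / (12 * (INR n + 1) * (t + ln (INR n + 1)) ^ 3))
      with ((/ ((INR n + 1) * (t + ln (INR n + 1)) ^ 2)
             - 2 / ((INR n + 1) * (t + ln (INR n + 1)) ^ 3)) / 24) by (field; lra).
    exact Hlo.
  - replace (/ (24 * INR n * (t + ln (INR n)) ^ 2))
      with (/ (INR n * (t + ln (INR n)) ^ 2) / 24) by (field; lra).
    exact Hhi.
Qed.

End Eta.

Lemma is_lim_seq_div_p_infty (u g : nat -> R) (c : R) :
  is_lim_seq u p_infty -> is_lim_seq (fun n => u n - g n) c ->
  is_lim_seq (fun n => g n / u n) 1.
Proof.
  intros Hu Hd.
  apply (is_lim_seq_ext_loc (fun n => 1 - (u n - g n) * / u n)).
  - destruct (proj2 (is_lim_seq_spec u p_infty) Hu 0) as [M HM].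
    exists M. intros n Hn. specialize (HM n Hn). field. lra.
  - replace (Finite 1) with (Finite (1 - c * 0)) by (f_equal; ring).
    apply is_lim_seq_minus'; [apply is_lim_seq_const|].
    apply is_lim_seq_mult'; [exact Hd | now apply is_lim_seq_inv_p_infty].
Qed.

Lemma is_lim_seq_ln_INR_plus (t c : R) : is_lim_seq (fun n => t + ln (INR n + c)) p_infty.
Proof.
  apply (is_lim_seq_plus _ _ t p_infty); [apply is_lim_seq_const | | reflexivity].
  eapply filterlim_comp; [apply is_lim_seq_INR_plus | apply is_lim_ln_p].
Qed.

Section Asymptotics.

Variable t : R.

Lemma ln_div_cv : is_lim_seq (fun n => ln (INR n) / (t + ln (INR n))) 1.
Proof.
  apply (is_lim_seq_div_p_infty _ _ t).
  - apply (is_lim_seq_ext (fun n => t + ln (INR n + 0))); [intro; now rewrite Rplus_0_r|].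
    apply is_lim_seq_ln_INR_plus.
  - apply (is_lim_seq_ext (fun _ => t)); [intro; ring | apply is_lim_seq_const].
Qed.

Lemma ln_div_succ_cv : is_lim_seq (fun n => ln (INR n) / (t + ln (INR n + 1))) 1.
Proof.
  apply (is_lim_seq_div_p_infty _ _ (t + 0)); [apply is_lim_seq_ln_INR_plus|].
  apply (is_lim_seq_ext (fun n => t + (ln (INR n + 1) - ln (INR n)))); [intro; ring|].
  apply is_lim_seq_plus'; [apply is_lim_seq_const | apply ln_shift_sub_cv; lra].
Qed.

Lemma INR_div_succ_cv : is_lim_seq (fun n => INR n / (INR n + 1)) 1.
Proof.
  apply (is_lim_seq_div_p_infty _ _ 1); [apply is_lim_seq_INR_plus|].
  apply (is_lim_seq_ext (fun _ => 1)); [intro; ring | apply is_lim_seq_const].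
Qed.

(* Multiplied by [24 n (ln n)^2], the bounds of [eta_tail_bounds] become
   ratios tending to [1]. *)
Lemma eta_tail_asymptotic (N : nat) : admissible t N ->
  Un_cv (fun n => (eta t N - eta_partial t N (n - 1)) * (24 * INR n * ln (INR n) ^ 2)) 1.
Proof.
  intros HN. apply is_lim_seq_Reals.
  set (r n := ln (INR n) / (t + ln (INR n))).
  set (r1 n := ln (INR n) / (t + ln (INR n + 1))).
  apply (is_lim_seq_le_le_loc
    (fun n => INR n / (INR n + 1) * (r1 n * r1 n * (1 - 2 * / (t + ln (INR n + 1)))))
    _ (fun n => r n * r n)).
  - exists N. intros n Hn.
    pose proof (admissible_le t N n HN Hn) as Hn'.
    destruct (admissible_log_domain t n Hn') as [H0 H1].
    destruct (admissible_log_domain_succ t n Hn') as [H2 H3].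
    rewrite (eta_sub_partial_pred t N n HN Hn).
    destruct (eta_tail_bounds t n Hn') as [Hlo Hhi].
    assert (Hw : 0 <= 24 * INR n * ln (INR n) ^ 2).
    { apply Rmult_le_pos; [lra | apply pow2_ge_0]. }
    unfold r, r1. split.
    + replace (INR n / (INR n + 1) * (ln (INR n) / (t + ln (INR n + 1)) *
        (ln (INR n) / (t + ln (INR n + 1))) * (1 - 2 * / (t + ln (INR n + 1)))))
        with ((/ (24 * (INR n + 1) * (t + ln (INR n + 1)) ^ 2)
               - / (12 * (INR n + 1) * (t + ln (INR n + 1)) ^ 3))
              * (24 * INR n * ln (INR n) ^ 2)) by (field; lra).
      apply Rmult_le_compat_r; lra.
    + replace (ln (INR n) / (t + ln (INR n)) * (ln (INR n) / (t + ln (INR n))))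
        with (/ (24 * INR n * (t + ln (INR n)) ^ 2) * (24 * INR n * ln (INR n) ^ 2))
        by (field; lra).
      apply Rmult_le_compat_r; lra.
  - replace (Finite 1) with (Finite (1 * (1 * 1 * (1 - 2 * 0)))) by (f_equal; ring).
    apply is_lim_seq_mult'; [apply INR_div_succ_cv|].
    apply is_lim_seq_mult'; [apply is_lim_seq_mult'; apply ln_div_succ_cv|].
    apply is_lim_seq_minus'; [apply is_lim_seq_const|].
    apply is_lim_seq_mult'; [apply is_lim_seq_const|].
    apply is_lim_seq_inv_p_infty, is_lim_seq_ln_INR_plus.
  - replace (Finite 1) with (Finite (1 * 1)) by (f_equal; ring).
    apply is_lim_seq_mult'; apply ln_div_cv.
Qed.

End Asymptotics.

Lemma eta_le_inv_sq (t : R) (N : nat) : (1 <= N)%nat -> 1 <= t ->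
  Rabs (eta t N) <= / 24 / (INR N * t ^ 2).
Proof.
  intros HN Ht.
  assert (HNR : 1 <= INR N) by (apply (le_INR 1); lia).
  assert (Hl : 0 <= ln (INR N)) by (rewrite <- ln_1; apply ln_le; lra).
  assert (Hadm : admissible t N) by (split; [exact HN | lra]).
  destruct (eta_tail_bounds t N Hadm) as [_ Hhi].
  rewrite Rabs_pos_eq by (left; now apply eta_pos).
  left. eapply Rlt_le_trans; [exact Hhi|].
  replace (/ 24 / (INR N * t ^ 2)) with (/ (24 * INR N * t ^ 2)) by (field; split; lra).
  apply Rinv_le_contravar; [pos_factors|].
  apply Rmult_le_compat_l; [lra|]. apply pow_incr. lra.
Qed.

Theorem proposition3p4 :
  (forall (N : nat) (t : R), (1 <= N)%nat -> t > - ln (INR N) ->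
    ((forall n, (N <= n)%nat -> eta_partial t N n > 0) /\
     (forall n, (N <= n)%nat -> eta_partial t N n < eta_partial t N (S n)) /\
     (exists B, forall n, (N <= n)%nat -> eta_partial t N n <= B) /\
     Un_cv (fun n => eta_partial t N n) (eta t N) /\ eta t N > 0) /\
    (forall n, (N <= n)%nat ->
       eta t N - eta_partial t N (n - 1) = eta t n /\
       exists I1 I2,
         improper_integral_to (eta_integrand t) (INR n + 1) I1 /\
         improper_integral_to (eta_integrand t) (INR n) I2 /\
         / 24 * I1 <= eta t n <= / 24 * I2) /\
    (forall n, (N <= n)%nat ->
       / (24 * (INR n + 1) * (t + ln (INR n + 1)) ^ 2)
         - / (12 * (INR n + 1) * (t + ln (INR n + 1)) ^ 3)
       < eta t N - eta_partial t N (n - 1) /\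
       eta t N - eta_partial t N (n - 1)
       < / (24 * INR n * (t + ln (INR n)) ^ 2)) /\
    Un_cv (fun n => (eta t N - eta_partial t N (n - 1)) * (24 * INR n * (ln (INR n)) ^ 2)) 1) /\
  (exists C T, T > 0 /\ forall (N : nat) (t : R), (1 <= N)%nat -> t >= T ->
     Rabs (eta t N) <= C / (INR N * t ^ 2)).
Proof.
  split.
  - intros N t HN Ht. assert (Hadm : admissible t N) by (split; [exact HN | lra]).
    split; [repeat split | split; [|split]].
    + intros n Hn. now apply eta_partial_pos.
    + intros n Hn. rewrite eta_partial_S by lia.
      pose proof (eta_term_pos t (S n) (admissible_le t N (S n) Hadm ltac:(lia))). lra.
    + exists (tail_upper t (INR N) / 24). intros n _.
      pose proof (eta_partial_bounded t N n Hadm). lra.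
    + now apply eta_cv.
    + now apply eta_pos.
    + intros n Hn. rewrite eta_sub_partial_pred by assumption. split; [reflexivity|].
      now apply eta_between_tail_integrals, (admissible_le t N).
    + intros n Hn. rewrite eta_sub_partial_pred by assumption.
      now apply eta_tail_bounds, (admissible_le t N).
    + now apply eta_tail_asymptotic.
  - exists (/ 24), 1. split; [lra|].
    intros N t HN Ht. apply eta_le_inv_sq; [exact HN | lra].
Qed.
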